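(* Let $q\ge8$ be even. The $\mathrm{U}\Gamma$-lines (non-tangent unisecants of the twisted cubic $\mathcal{C}$ lying in an osculating plane) form two orbits under $G_q$, of sizes $q+1$ and $q^2-1$, namely $\{\ell_1\varphi:\varphi\in G_q\}$ and $\{\ell_2\varphi:\varphi\in G_q\}$, where $P_0=P(0,0,0,1)$, $\ell_1$ is the line through $P_0$ and $P(0,1,0,0)$, and $\ell_2$ is the line through $P_0$ and $P(0,1,1,0)$. The orbit of size $q+1$ consists of the lines of the regulus complementary to that of the tangents. The subgroup $G_q^{\ell_1}$ of $G_q$ fixing $\ell_1$ has size $q(q-1)$, and each of its elements has a matrix of the form $\begin{pmatrix}1&c&c^2&c^3\\0&d&0&c^2d\\0&0&d^2&cd^2\\0&0&0&d^3\end{pmatrix}$, $c\in\mathbb{F}_q$, $d\in\mathbb{F}_q^*$. The subgroup $G_q^{\ell_2}$ fixing $\ell_2$ has size $q$, and each of its elements has a matrix of the form $\begin{pmatrix}1&c&c^2&c^3\\0&1&0&c^2\\0&0&1&c\\0&0&0&1\end{pmatrix}$, $c\in\mathbb{F}_q$.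
   Context: $\mathrm{PG}(3,q)$ has points $P(x_0,x_1,x_2,x_3)$; $\boldsymbol{\pi}(c_0,c_1,c_2,c_3)$ is the plane $c_0x_0+c_1x_1+c_2x_2+c_3x_3=0$. For $t\in\mathbb{F}_q$ let $P_t=P(t^3,t^2,t,1)$, $P_\infty=P(1,0,0,0)$; the twisted cubic is $\mathcal{C}=\{P_t\}$. The osculating planes are $\pi_{\mathrm{osc}}(t)=\boldsymbol{\pi}(1,-3t,3t^2,-t^3)$ ($t\in\mathbb{F}_q$), $\pi_{\mathrm{osc}}(\infty)=\boldsymbol{\pi}(0,0,0,1)$. The tangent at $P_t$ ($t\in\mathbb{F}_q$) is the line through $P_t$ and $P(3t^2,2t,1,0)$; the tangent at $P_\infty$ is $x_2=x_3=0$. A $\mathrm{U}\Gamma$-line is a line meeting $\mathcal{C}$ in exactly one point, not a tangent, contained in an osculating plane. For $q$ even the $q+1$ tangents form a regulus; the complementary regulus is the opposite family of $q+1$ lines of the same hyperbolic quadric. $G_q$ is the group of projectivities mapping $\mathcal{C}$ to itself; for $q\ge5$ its elements are $x\mapsto xM$ on row vectors, $M=\begin{pmatrix} a^3&a^2c&ac^2&c^3\\ 3a^2b&a^2d+2abc&bc^2+2acd&3c^2d\\ 3ab^2&b^2c+2abd&ad^2+2bcd&3cd^2\\ b^3&b^2d&bd^2&d^3\end{pmatrix}$, $ad-bc\ne0$, up to scalar. *)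

(* PG(3,q) over a finite field F, points = nonzero row vectors
   'rV[F]_4 up to scalars, lines = 2-dimensional row spaces, represented
   canonically by their generated-space matrix <<_>>%MS : 'M[F]_4. *)
From HB Require Import structures.
From mathcomp Require Import all_boot all_order all_algebra.
Set Implicit Arguments. Unset Strict Implicit. Unset Printing Implicit Defensive.
Import Order.TTheory GRing.Theory Num.Theory.
Local Open Scope ring_scope.

Section PG3.
Variable F : fieldType.

Definition mx4 (rows : seq (seq F)) : 'M[F]_4 :=
  \matrix_(i < 4, j < 4) nth 0 (nth [::] rows i) j.
Definition rv4 (a b c d : F) : 'rV[F]_4 := \row_(j < 4) nth 0 [:: a; b; c; d] j.

(* the matrix M of the projectivity x |-> xM of G_q associated with (a,b,c,d) *)
Definition GqMx (a b c d : F) : 'M[F]_4 :=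
  mx4 [:: [:: a ^+ 3; a ^+ 2 * c; a * c ^+ 2; c ^+ 3];
          [:: 3%:R * a ^+ 2 * b; a ^+ 2 * d + 2%:R * a * b * c;
              b * c ^+ 2 + 2%:R * a * c * d; 3%:R * c ^+ 2 * d];
          [:: 3%:R * a * b ^+ 2; b ^+ 2 * c + 2%:R * a * b * d;
              a * d ^+ 2 + 2%:R * b * c * d; 3%:R * c * d ^+ 2];
          [:: b ^+ 3; b ^+ 2 * d; b * d ^+ 2; d ^+ 3]].

Definition stabMx (c d : F) : 'M[F]_4 :=
  mx4 [:: [:: 1; c; c ^+ 2; c ^+ 3];
          [:: 0; d; 0; c ^+ 2 * d];
          [:: 0; 0; d ^+ 2; c * d ^+ 2];
          [:: 0; 0; 0; d ^+ 3]].

(* points of the twisted cubic: Some t = P_t, None = P_infinity *)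
Definition Cpt (o : option F) : 'rV[F]_4 :=
  match o with
  | Some t => rv4 (t ^+ 3) (t ^+ 2) t 1
  | None => rv4 1 0 0 0
  end.

Definition line_through (u v : 'rV[F]_4) : 'M[F]_4 := <<col_mx u v>>%MS.

Definition is_line (U : 'M[F]_4) : bool := (\rank U == 2)%N && (<<U>>%MS == U).

Definition on_line (u : 'rV[F]_4) (U : 'M[F]_4) : bool := (u <= U)%MS.

Definition lines_meet (U V : 'M[F]_4) : bool := (U :&: V)%MS != 0.

Definition tangent (o : option F) : 'M[F]_4 :=
  match o with
  | Some t => line_through (Cpt (Some t)) (rv4 (3%:R * t ^+ 2) (2%:R * t) 1 0)
  | None => line_through (rv4 1 0 0 0) (rv4 0 1 0 0)
  end.

(* coefficient vector (c0,c1,c2,c3) of the osculating plane *)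
Definition osc (o : option F) : 'rV[F]_4 :=
  match o with
  | Some t => rv4 1 (- (3%:R * t)) (3%:R * t ^+ 2) (- t ^+ 3)
  | None => rv4 0 0 0 1
  end.

Definition in_plane (U : 'M[F]_4) (c : 'rV[F]_4) : bool := U *m c^T == 0.

Definition line_image (U M : 'M[F]_4) : 'M[F]_4 := <<U *m M>>%MS.

End PG3.

Section Finite.
Variable F : finFieldType.

Definition is_UGamma (U : 'M[F]_4) : bool :=
  [&& is_line U,
      #|[set o : option F | on_line (Cpt o) U]| == 1%N,
      [forall o : option F, U != tangent o] &
      [exists o : option F, in_plane U (osc o)]].

Definition UGamma_lines : {set 'M[F]_4} := [set U | is_UGamma U].

(* the lines of the regulus complementary to the tangents: the transversals
   of the tangent regulus (lines meeting every tangent) *)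
Definition compl_regulus : {set 'M[F]_4} :=
  [set U | is_line U && [forall o : option F, lines_meet U (tangent o)]].

Definition Gq_mx : {set 'M[F]_4} :=
  [set M | [exists a : F, exists b : F, exists c : F, exists d : F,
             (a * d - b * c != 0) && (M == GqMx a b c d)]].

(* a projectivity = class of matrices up to nonzero scalars *)
Definition projclass (M : 'M[F]_4) : {set 'M[F]_4} :=
  [set k *: M | k : F & k != 0].

Definition Gq : {set {set 'M[F]_4}} := [set projclass M | M in Gq_mx].

Definition line_orbit (U : 'M[F]_4) : {set 'M[F]_4} :=
  [set line_image U M | M in Gq_mx].

Definition line_stab (U : 'M[F]_4) : {set {set 'M[F]_4}} :=
  [set g in Gq | [forall M in g, line_image U M == U]].

End Finite.

From HB Require Import structures.
From mathcomp Require Import all_boot all_order all_algebra.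
From mathcomp Require Import fingroup pgroup abelian finfield.
From mathcomp Require Import ring.
Import GRing.Theory.
Local Open Scope ring_scope.
Set Implicit Arguments. Unset Strict Implicit. Unset Printing Implicit Defensive.

(* Besides the tangent, the lines through [P_o] in its osculating plane are the joins
   [ug_line o v] of [P_o] with [osc_dir o + v tangent_dir o]; since that plane meets
   the cubic only in [P_o], these are exactly the UGamma-lines.  In characteristic 2
   the matrix [GqMx a b c d] maps [ug_line P_0 v] to [ug_line P_(b/d) (v d^2/(ad - bc))]
   (to [ug_line P_oo (v b/c)] when [d = 0]).  Hence [G_q] preserves whether [v = 0]
   and is transitive on both classes, which have [q + 1] and [(q + 1)(q - 1)]
   elements and contain [l1] ([v = 0]) and [l2] ([v = 1]).  The lines with [v = 0]
   join [(x,y,0,0)] to [(0,0,x,y)]; these are exactly the transversals of the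
   tangents.  The same formula shows that the stabilisers are given by the matrices
   with [b = 0], and moreover [d = a] for [l2]. *)

Lemma even_card_pchar2 (F : finFieldType) : ~~ odd #|F| -> 2 \in [pchar F].
Proof.
move=> even_F; have /is_abelemP [p p_pr abelF] := finField_is_abelem F.
have cardF := card_pgroup (abelem_pgroup abelF); rewrite cardsT in cardF.
have charF := card_finPcharP cardF p_pr.
suff p2 : p = 2%N by rewrite p2 in charF.
have [//|odd_p] := even_prime p_pr.
by move: even_F; rewrite cardF oddX odd_p orbT.
Qed.

Local Notation i0 := (@Ordinal 4 0 erefl).
Local Notation i1 := (@Ordinal 4 1 erefl).
Local Notation i2 := (@Ordinal 4 2 erefl).
Local Notation i3 := (@Ordinal 4 3 erefl).

Section Coordinates.
Variable F : fieldType.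
Implicit Types (a b c d x y k : F) (u : 'rV[F]_4).

Lemma rv4E a b c d (j : 'I_4) : rv4 a b c d 0 j = nth 0 [:: a; b; c; d] j.
Proof. by rewrite mxE. Qed.

Lemma rv4_eta u : u = rv4 (u 0 i0) (u 0 i1) (u 0 i2) (u 0 i3).
Proof.
by apply/rowP => -[[|[|[|[|j]]]] lt_j4] //=; rewrite rv4E; congr (u _ _); apply: val_inj.
Qed.

Lemma rv4_inj a b c d a' b' c' d' :
  rv4 a b c d = rv4 a' b' c' d' -> [/\ a = a', b = b', c = c' & d = d'].
Proof.
move=> eq_rv; have E j : rv4 a b c d 0 j = rv4 a' b' c' d' 0 j by rewrite eq_rv.
by move: (E i0) (E i1) (E i2) (E i3); rewrite !rv4E.
Qed.

Lemma add_rv4 a b c d a' b' c' d' :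
  rv4 a b c d + rv4 a' b' c' d' = rv4 (a + a') (b + b') (c + c') (d + d').
Proof. by apply/rowP => -[[|[|[|[|j]]]] lt_j4]; rewrite !mxE. Qed.

Lemma scale_rv4 k a b c d : k *: rv4 a b c d = rv4 (k * a) (k * b) (k * c) (k * d).
Proof. by apply/rowP => -[[|[|[|[|j]]]] lt_j4]; rewrite !mxE. Qed.

Lemma rv4_0 : rv4 0 0 0 0 = 0 :> 'rV[F]_4.
Proof. by apply/rowP => -[[|[|[|[|j]]]] lt_j4]; rewrite !mxE. Qed.

Lemma rv4_eq0 a b c d : (rv4 a b c d == 0) = [&& a == 0, b == 0, c == 0 & d == 0].
Proof.
apply/eqP/and4P => [| [/eqP-> /eqP-> /eqP-> /eqP->] //]; last exact: rv4_0.
by rewrite -rv4_0 => /rv4_inj[-> -> -> ->]; rewrite eqxx.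
Qed.

Lemma sum_ord4 (f : 'I_4 -> F) : \sum_(k < 4) f k = f i0 + f i1 + f i2 + f i3.
Proof.
rewrite !big_ord_recr big_ord0 /= add0r.
by congr (_ + _ + _ + _); congr f; apply: val_inj.
Qed.

Lemma mul_rv4 x0 x1 x2 x3 (M : 'M[F]_4) :
  rv4 x0 x1 x2 x3 *m M =
  rv4 (x0 * M i0 i0 + x1 * M i1 i0 + x2 * M i2 i0 + x3 * M i3 i0)
      (x0 * M i0 i1 + x1 * M i1 i1 + x2 * M i2 i1 + x3 * M i3 i1)
      (x0 * M i0 i2 + x1 * M i1 i2 + x2 * M i2 i2 + x3 * M i3 i2)
      (x0 * M i0 i3 + x1 * M i1 i3 + x2 * M i2 i3 + x3 * M i3 i3).
Proof.
apply/rowP => -[[|[|[|[|j]]]] lt_j4]; rewrite mxE sum_ord4 !rv4E //=;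
  by congr (_ + _ + _ + _); congr (_ * M _ _); apply: val_inj.
Qed.

Lemma rv4_orthogonal x0 x1 x2 x3 y0 y1 y2 y3 :
  (rv4 x0 x1 x2 x3 *m (rv4 y0 y1 y2 y3)^T == 0) =
  (x0 * y0 + x1 * y1 + x2 * y2 + x3 * y3 == 0).
Proof.
apply/eqP/eqP => [/(congr1 (fun M : 'M[F]_1 => M 0 0)) | eq0].
  by rewrite !mxE sum_ord4 !mxE.
by apply/matrixP => i j; rewrite !ord1 !mxE sum_ord4 !mxE.
Qed.

End Coordinates.

Section Lines.
Variable F : fieldType.
Implicit Types (x y a b c d k : F) (u v w : 'rV[F]_4) (U V M : 'M[F]_4).

Lemma line_through_sub m (A : 'M[F]_(m, 4)) u v :
  (line_through u v <= A)%MS = (u <= A)%MS && (v <= A)%MS.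
Proof. by rewrite genmxE col_mx_sub. Qed.

Lemma sub_line_throughl u v : (u <= line_through u v)%MS.
Proof. by have := submx_refl (line_through u v); rewrite line_through_sub => /andP[]. Qed.

Lemma sub_line_throughr u v : (v <= line_through u v)%MS.
Proof. by have := submx_refl (line_through u v); rewrite line_through_sub => /andP[]. Qed.

Lemma sub_line_throughP u v w :
  reflect (exists x y, w = x *: u + y *: v) (w <= line_through u v)%MS.
Proof.
apply: (iffP idP) => [| [x [y ->]]].
  rewrite genmxE => /submxP[D ->]; rewrite -[D]hsubmxK mul_row_col.
  rewrite (mx11_scalar (lsubmx D)) (mx11_scalar (rsubmx D)) !mul_scalar_mx.
  by do 2!eexists.
by rewrite addmx_sub ?scalemx_sub ?sub_line_throughl ?sub_line_throughr.
Qed.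

Lemma line_through_lincomb u v a b c d :
  a * d - b * c != 0 ->
  line_through (a *: u + b *: v) (c *: u + d *: v) = line_through u v.
Proof.
move=> det_nz; apply/genmxP/andP; rewrite !col_mx_sub.
have lincomb (u0 v0 : 'rV[F]_4) x y : ((x *: u0 + y *: v0)%R <= col_mx u0 v0)%MS.
  by rewrite -addsmxE addmx_sub ?scalemx_sub ?addsmxSl ?addsmxSr.
split; first by rewrite !lincomb.
pose e := a * d - b * c; apply/andP; split.
  have {1}-> : u = (d / e) *: (a *: u + b *: v) + (- b / e) *: (c *: u + d *: v).
    by apply/rowP => j; rewrite !mxE /e; field.
  exact: lincomb.
have {1}-> : v = (- c / e) *: (a *: u + b *: v) + (a / e) *: (c *: u + d *: v).
  by apply/rowP => j; rewrite !mxE /e; field.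
exact: lincomb.
Qed.

Lemma line_image_through u v M :
  line_image (line_through u v) M = line_through (u *m M) (v *m M).
Proof. by rewrite /line_image /line_through -mul_col_mx; apply/eq_genmx/eqmxMr/genmxE. Qed.

Lemma line_imageZ U M k : k != 0 -> line_image U (k *: M) = line_image U M.
Proof. by move=> k_nz; rewrite /line_image -scalemxAr; apply/eq_genmx/eqmx_scale. Qed.

Lemma is_line_through u v : u != 0 -> ~~ (v <= u)%MS -> is_line (line_through u v).
Proof.
move=> u_nz v_u; rewrite /is_line genmx_id eqxx andbT genmxE -addsmxE.
have rk_le2 : (\rank (u + v)%MS <= 2)%N by rewrite addsmxE rank_leq_row.
have lt_u_uv : (\rank u < \rank (u + v)%MS)%N.
  have [le_u_uv eq_rk] := mxrank_leqif_sup (addsmxSl u v).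
  by rewrite ltn_neqAle le_u_uv eq_rk addsmx_sub submx_refl andbT.
by move: lt_u_uv; rewrite rank_rV u_nz eqn_leq rk_le2.
Qed.

Lemma is_line_sub_eq U V : is_line U -> is_line V -> (U <= V)%MS -> U = V.
Proof.
move=> /andP[/eqP rkU /eqP genU] /andP[/eqP rkV /eqP genV] sUV.
have [_] := mxrank_leqif_eq sUV; rewrite rkU rkV eqxx => /esym/genmxP.
by rewrite genU genV.
Qed.

Lemma lines_meetP U V :
  reflect (exists w, [/\ w != 0, (w <= U)%MS & (w <= V)%MS]) (lines_meet U V).
Proof.
apply: (iffP idP) => [UV_nz | [w [w_nz wU wV]]].
  have [i row_nz] : exists i, row i (U :&: V)%MS != 0.
    apply/existsP; apply: contraR UV_nz => /existsPn rows0.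
    by apply/eqP/row_matrixP => i; rewrite row0; apply/eqP/negPn/rows0.
  by exists (row i (U :&: V)%MS); rewrite !(submx_trans (row_sub _ _)) ?capmxSl ?capmxSr.
apply: contra w_nz => /eqP UV0.
by rewrite -submx0 -UV0 sub_capmx wU wV.
Qed.

End Lines.

Section TwistedCubic.
Variable F : fieldType.
Implicit Types (t a b c x y v w : F) (o : option F) (u : 'rV[F]_4) (U : 'M[F]_4).

(* Together with [Cpt o], these span the osculating plane at [P_o]. *)
Definition tangent_dir o : 'rV[F]_4 :=
  if o is Some t then rv4 (3%:R * t ^+ 2) (2%:R * t) 1 0 else rv4 0 1 0 0.

Definition osc_dir o : 'rV[F]_4 :=
  if o is Some t then rv4 (3%:R * t) 1 0 0 else rv4 0 0 1 0.

Definition osc_plane o : 'M[F]_4 := kermx (osc o)^T.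

Definition ug_line o v : 'M[F]_4 :=
  line_through (Cpt o) (osc_dir o + v *: tangent_dir o).

Lemma Cpt_Some0 : Cpt (Some 0) = rv4 0 0 0 1 :> 'rV[F]_4.
Proof. by rewrite /= !expr0n. Qed.

Lemma ug_line_Some0 v : ug_line (Some 0) v = line_through (rv4 0 0 0 1) (rv4 0 1 v 0).
Proof.
by rewrite /ug_line Cpt_Some0 /= scale_rv4 add_rv4 !expr0n /= !mulr0 !mulr1 !add0r !addr0.
Qed.

Lemma tangentE o : tangent o = line_through (Cpt o) (tangent_dir o).
Proof. by case: o. Qed.

Lemma in_planeE U o : in_plane U (osc o) = (U <= osc_plane o)%MS.
Proof. by rewrite sub_kermx. Qed.

Lemma Cpt_neq0 o : Cpt o != 0.
Proof. by case: o => [t|]; rewrite rv4_eq0 oner_eq0 ?andbF. Qed.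

Lemma Cpt_osc_plane o o' : (Cpt o' <= osc_plane o)%MS = (o' == o).
Proof.
apply/idP/eqP => [|->]; rewrite sub_kermx.
  case: o' => [s|]; case: o => [t|]; rewrite rv4_orthogonal //=.
  - move=> /eqP st; have : (s - t) ^+ 3 = 0 by rewrite -st; ring.
    by move/eqP; rewrite expf_eq0 subr_eq0 => /eqP->.
  - by rewrite !mulr0 !add0r mulr1 oner_eq0.
  - by rewrite !mul0r !addr0 mulr1 oner_eq0.
by case: o => [t|]; rewrite rv4_orthogonal //; apply/eqP; ring.
Qed.

Lemma tangent_dir_osc_plane o : (tangent_dir o <= osc_plane o)%MS.
Proof. by rewrite sub_kermx; case: o => [t|]; rewrite rv4_orthogonal //; apply/eqP; ring. Qed.

Lemma osc_dir_osc_plane o : (osc_dir o <= osc_plane o)%MS.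
Proof. by rewrite sub_kermx; case: o => [t|]; rewrite rv4_orthogonal //; apply/eqP; ring. Qed.

Definition osc_frame o a b c : 'rV[F]_4 :=
  a *: Cpt o + b *: tangent_dir o + c *: osc_dir o.

Lemma osc_frame_Cpt o : osc_frame o 1 0 0 = Cpt o.
Proof. by rewrite /osc_frame !scale0r !addr0 scale1r. Qed.

Lemma osc_frame_tangent_dir o : osc_frame o 0 1 0 = tangent_dir o.
Proof. by rewrite /osc_frame !scale0r addr0 add0r scale1r. Qed.

Lemma osc_frame_ug_point o v : osc_frame o 0 v 1 = osc_dir o + v *: tangent_dir o.
Proof. by rewrite /osc_frame scale0r add0r scale1r addrC. Qed.

Lemma scale_osc_frame o k a b c :
  k *: osc_frame o a b c = osc_frame o (k * a) (k * b) (k * c).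
Proof. by rewrite /osc_frame !scalerDr !scalerA. Qed.

Lemma add_osc_frame o a b c a' b' c' :
  osc_frame o a b c + osc_frame o a' b' c' = osc_frame o (a + a') (b + b') (c + c').
Proof. by rewrite /osc_frame !scalerDl addrACA [X in X + _ = _]addrACA. Qed.

Lemma osc_frame_inj o a b c a' b' c' :
  osc_frame o a b c = osc_frame o a' b' c' -> [/\ a = a', b = b' & c = c'].
Proof.
case: o => [t|]; rewrite /osc_frame !scale_rv4 !add_rv4 => /rv4_inj[];
  rewrite ?(mulr0, mulr1, addr0, add0r) // => _ + + aa'; rewrite -{}aa'.
by move=> + /addrI bb'; rewrite -{}bb' => /addrI.
Qed.

Lemma osc_planeP o u :
  reflect (exists a b c, u = osc_frame o a b c) (u <= osc_plane o)%MS.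
Proof.
apply: (iffP idP) => [| [a [b [c ->]]]]; last first.
  by rewrite !addmx_sub ?scalemx_sub ?Cpt_osc_plane ?tangent_dir_osc_plane ?osc_dir_osc_plane.
rewrite sub_kermx (rv4_eta u); set u0 := u 0 i0; set u1 := u 0 i1.
set u2 := u 0 i2; set u3 := u 0 i3; rewrite /osc_frame.
case: o => [t|]; rewrite rv4_orthogonal => /eqP u_osc.
  exists u3, (u2 - u3 * t), (u1 - 2%:R * t * u2 + u3 * t ^+ 2).
  have -> : u0 = 3%:R * t * u1 - 3%:R * t ^+ 2 * u2 + t ^+ 3 * u3.
    by apply/eqP; rewrite -subr_eq0 -u_osc; apply/eqP; ring.
  by rewrite !scale_rv4 !add_rv4; congr rv4; ring.
exists u0, u1, u2; have -> : u3 = 0 by rewrite -u_osc; ring.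
by rewrite !scale_rv4 !add_rv4; congr rv4; ring.
Qed.

Lemma sub_ug_lineP o v u :
  reflect (exists x y, u = osc_frame o x (y * v) y) (u <= ug_line o v)%MS.
Proof.
apply: (iffP (sub_line_throughP _ _ _)) => -[x [y ->]]; exists x, y;
  by rewrite -osc_frame_Cpt -osc_frame_ug_point !scale_osc_frame add_osc_frame;
     congr osc_frame; rewrite ?mulr0 ?addr0 ?add0r ?mulr1.
Qed.

Lemma ug_line_frame o k a b c :
  k != 0 -> c != 0 -> line_through (k *: Cpt o) (osc_frame o a b c) = ug_line o (b / c).
Proof.
move=> k_nz c_nz; rewrite /ug_line -osc_frame_ug_point.
rewrite -(line_through_lincomb _ (osc_frame o 0 (b / c) 1) (a := k) (b := 0) (c := a) (d := c))
  ?mul0r ?subr0 ?mulf_neq0 //.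
congr line_through; first by rewrite scale0r addr0.
by rewrite -osc_frame_Cpt !scale_osc_frame add_osc_frame; congr osc_frame; field.
Qed.

Lemma ug_line_osc_plane o v : (ug_line o v <= osc_plane o)%MS.
Proof.
rewrite line_through_sub Cpt_osc_plane eqxx /=.
by rewrite addmx_sub ?scalemx_sub ?tangent_dir_osc_plane ?osc_dir_osc_plane.
Qed.

Lemma is_line_ug_line o v : is_line (ug_line o v).
Proof.
apply: is_line_through (Cpt_neq0 o) _; apply/negP => /sub_rVP[k].
by rewrite -osc_frame_ug_point -osc_frame_Cpt scale_osc_frame => /osc_frame_inj[_ _ /eqP];
  rewrite mulr0 oner_eq0.
Qed.

Lemma Cpt_ug_line o o' v : (Cpt o' <= ug_line o v)%MS = (o' == o).
Proof.
apply/idP/eqP => [/submx_trans/(_ (ug_line_osc_plane o v)) | ->].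
  by rewrite Cpt_osc_plane => /eqP.
exact: sub_line_throughl.
Qed.

Lemma ug_line_inj o o' v v' : ug_line o v = ug_line o' v' -> o = o' /\ v = v'.
Proof.
move=> eq_ug; have eq_o : o = o'.
  by apply/eqP; rewrite -(Cpt_ug_line o' o v') -eq_ug sub_line_throughl.
split=> //; have := sub_line_throughr (Cpt o) (osc_dir o + v *: tangent_dir o).
rewrite -[line_through _ _]/(ug_line o v) eq_ug -eq_o -osc_frame_ug_point.
by case/sub_ug_lineP=> x [y /osc_frame_inj[_ -> <-]]; rewrite mul1r.
Qed.

Lemma ug_line_neq_tangent o o' v : ug_line o v != tangent o'.
Proof.
apply/eqP => eq_ug; have eq_o : o' = o.
  by apply/eqP; rewrite -(Cpt_ug_line o o' v) eq_ug tangentE sub_line_throughl.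
have := sub_line_throughr (Cpt o) (tangent_dir o).
rewrite -tangentE -eq_o -eq_ug -osc_frame_tangent_dir eq_o.
case/sub_ug_lineP=> x [y /osc_frame_inj[_ + y0]].
by rewrite -y0 mul0r => /eqP; rewrite oner_eq0.
Qed.

Lemma is_line_tangent o : is_line (tangent o).
Proof.
rewrite tangentE is_line_through ?Cpt_neq0 //; apply/negP => /sub_rVP[k].
rewrite -osc_frame_tangent_dir -osc_frame_Cpt scale_osc_frame => /osc_frame_inj[_ /eqP].
by rewrite mulr0 oner_eq0.
Qed.

Lemma ug_line_classify o U :
  is_line U -> (Cpt o <= U)%MS -> (U <= osc_plane o)%MS -> U != tangent o ->
  exists v, U = ug_line o v.
Proof.
move=> U_line PoU U_osc U_tan.
have /row_subPn[i row_tan] : ~~ (U <= tangent o)%MS.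
  by apply: contra U_tan => /(is_line_sub_eq U_line (is_line_tangent o))->.
have /osc_planeP[a [b [c row_abc]]] := submx_trans (row_sub i U) U_osc.
have c_nz : c != 0.
  apply: contra row_tan => /eqP c0; rewrite row_abc c0 tangentE.
  by apply/sub_line_throughP; exists a, b; rewrite /osc_frame scale0r addr0.
exists (b / c); apply/esym/is_line_sub_eq; rewrite ?is_line_ug_line //.
rewrite line_through_sub PoU -osc_frame_ug_point.
have -> : osc_frame o 0 (b / c) 1 = c^-1 *: row i U + (- (a / c)) *: Cpt o.
  rewrite row_abc -osc_frame_Cpt !scale_osc_frame add_osc_frame.
  by congr osc_frame; field.
by rewrite addmx_sub ?scalemx_sub ?row_sub.
Qed.

End TwistedCubic.

Lemma is_UGammaP (F : finFieldType) (U : 'M[F]_4) :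
  reflect (exists o v, U = ug_line o v) (is_UGamma U).
Proof.
apply: (iffP and4P) => [[U_line /cards1P[o PU] /forallP U_tan /existsP[o' U_osc]] |
                        [o [v ->]]].
  have PoU : (Cpt o <= U)%MS by have := set11 o; rewrite -PU inE.
  rewrite in_planeE in U_osc; have eq_o : o = o'.
    by apply/eqP; rewrite -Cpt_osc_plane (submx_trans PoU U_osc).
  rewrite -{}eq_o in U_osc; have [v ->] := ug_line_classify U_line PoU U_osc (U_tan o).
  by exists o, v.
split; first exact: is_line_ug_line.
- by apply/cards1P; exists o; apply/setP => o'; rewrite !inE /on_line Cpt_ug_line.
- by apply/forallP => o'; apply: ug_line_neq_tangent.
- by apply/existsP; exists o; rewrite in_planeE ug_line_osc_plane.
Qed.

Section CharTwo.
Variable F : fieldType.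
Hypothesis char2 : 2 \in [pchar F].
Implicit Types (t a b c d x y v w : F) (o : option F) (U : 'M[F]_4).

Lemma natr3_char2 : 3%:R = 1 :> F.
Proof. by rewrite -[3%N]/(2 + 1)%N natrD (pcharf0 char2) add0r. Qed.

Lemma tangent_dir_char2 t : tangent_dir (Some t) = rv4 (t ^+ 2) 0 1 0.
Proof. by rewrite /= natr3_char2 (pcharf0 char2) mul1r mul0r. Qed.

Lemma osc_dir_char2 t : osc_dir (Some t) = rv4 t 1 0 0.
Proof. by rewrite /= natr3_char2 mul1r. Qed.

(* In characteristic 2 these are the lines of the regulus opposite to the tangents. *)
Definition regulus_line x y : 'M[F]_4 := line_through (rv4 x y 0 0) (rv4 0 0 x y).

Lemma regulus_lineZ k x y : k != 0 -> regulus_line (k * x) (k * y) = regulus_line x y.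
Proof.
move=> k_nz; rewrite /regulus_line.
rewrite -(line_through_lincomb (rv4 x y 0 0) _ (a := k) (b := 0) (c := 0) (d := k))
  ?mulr0 ?subr0 ?mulf_neq0 //.
by congr line_through; rewrite !scale_rv4 !add_rv4; congr rv4; ring.
Qed.

Lemma ug_line0_None : ug_line None 0 = regulus_line 1 0.
Proof. by rewrite /ug_line scale0r addr0. Qed.

Lemma ug_line0_Some t : ug_line (Some t) 0 = regulus_line t 1.
Proof.
rewrite /ug_line scale0r addr0 osc_dir_char2 /regulus_line.
rewrite -(line_through_lincomb (rv4 t 1 0 0) _ (a := t ^+ 2) (b := 1) (c := 1) (d := 0))
  ?mulr0 ?sub0r ?mulr1 ?oppr_eq0 ?oner_eq0 //.
by congr line_through; rewrite !scale_rv4 !add_rv4; congr rv4; ring.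
Qed.

Lemma regulus_line_ug x y : (x != 0) || (y != 0) -> exists o, regulus_line x y = ug_line o 0.
Proof.
have [-> | y_nz _] := eqVneq y 0; first rewrite orbF => x_nz.
  by exists None; rewrite ug_line0_None -(regulus_lineZ 1 0 x_nz) mulr1 mulr0.
exists (Some (x / y)).
by rewrite ug_line0_Some -(regulus_lineZ (x / y) 1 y_nz) mulr1 mulrC divfK.
Qed.

Lemma regulus_line_meets_tangent x y o :
  (x != 0) || (y != 0) -> lines_meet (regulus_line x y) (tangent o).
Proof.
move=> xy_nz; apply/lines_meetP; case: o => [s|].
  exists (s ^+ 2 *: rv4 x y 0 0 + 1 *: rv4 0 0 x y); split.
  - rewrite scale1r scale_rv4 add_rv4 rv4_eq0 ?(mulr0, addr0, add0r).
    by apply: contraTN xy_nz => /and4P[_ _ /eqP-> /eqP->]; rewrite eqxx.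
  - by apply/sub_line_throughP; exists (s ^+ 2), 1.
  rewrite tangentE; apply/sub_line_throughP; exists y, (x - y * s).
  by rewrite tangent_dir_char2 !scale_rv4 !add_rv4; congr rv4; ring.
exists (rv4 x y 0 0); split.
- by rewrite rv4_eq0; apply: contraTN xy_nz => /and4P[/eqP-> /eqP-> _ _]; rewrite eqxx.
- exact: sub_line_throughl.
by apply/sub_line_throughP; exists x, y; rewrite !scale_rv4 !add_rv4; congr rv4; ring.
Qed.

(* The tangents at [P_oo] and [P_0] are skew, so [U] joins a point [(x,y,0,0)] of the
   first to a point of the second; meeting the tangent at [P_1] forces the latter to
   be proportional to [(0,0,x,y)]. *)
Lemma tangent_transversal U :
  is_line U -> (forall o, lines_meet U (tangent o)) ->
  exists x y, ((x != 0) || (y != 0)) /\ U = regulus_line x y.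
Proof.
move=> U_line meets.
pose simp := (expr0n, expr1n, mulr0, mulr1, addr0, add0r, scale_rv4, add_rv4).
have /lines_meetP[p [p_nz pU /sub_line_throughP[x [y p_xy]]]] := meets None.
have /lines_meetP[r [r_nz rU]] := meets (Some 0).
rewrite tangentE Cpt_Some0 tangent_dir_char2 => /sub_line_throughP[y' [x' r_xy]].
have /lines_meetP[s [s_nz sU]] := meets (Some 1).
rewrite tangentE tangent_dir_char2 => /sub_line_throughP[al [be s_ab]].
rewrite {}p_xy !simp in p_nz pU; rewrite {}r_xy /= !simp in r_nz rU.
rewrite {}s_ab /= !simp in s_nz sU.
have xy_nz : (x != 0) || (y != 0).
  by apply: contraNT p_nz => /norP[/negPn/eqP-> /negPn/eqP->]; rewrite rv4_0.
have U_pr : U = line_through (rv4 x y 0 0) (rv4 0 0 x' y').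
  apply/esym/is_line_sub_eq; rewrite ?line_through_sub ?pU ?rU //.
  apply: is_line_through p_nz _; apply: contra r_nz => /sub_rVP[k].
  by rewrite !simp => /rv4_inj[_ _ -> ->]; rewrite rv4_0.
move: sU; rewrite U_pr => /sub_line_throughP[mu [nu]]; rewrite !simp.
case/rv4_inj => e0 e1 e2 e3.
have mu_nz : mu != 0.
  by apply: contraNneq s_nz => mu0; rewrite e0 e1 mu0 !mul0r rv4_0.
have nu_nz : nu != 0.
  by apply: contraNneq s_nz => nu0; rewrite e2 e3 nu0 !mul0r rv4_0.
have -> : x' = mu / nu * x by apply: (mulfI nu_nz); rewrite -e2 e0; field.
have -> : y' = mu / nu * y by apply: (mulfI nu_nz); rewrite -e3 e1; field.
exists x, y; split=> //; rewrite /regulus_line.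
rewrite -(line_through_lincomb _ (rv4 0 0 x y) (a := 1) (b := 0) (c := 0) (d := mu / nu));
  last by rewrite mulr0 subr0 mul1r mulf_neq0 ?invr_neq0.
by congr line_through; rewrite !simp ?mul1r ?mul0r ?addr0 ?add0r.
Qed.

Lemma line_image_ug_line v a b c d :
  a * d - b * c != 0 ->
  line_image (ug_line (Some 0) v) (GqMx a b c d) =
  if d == 0 then ug_line None (v * b / c)
  else ug_line (Some (b / d)) (v * d ^+ 2 / (a * d - b * c)).
Proof.
move=> det_nz; rewrite [ug_line _ v]/ug_line line_image_through Cpt_Some0 /=.
have [d0 | d_nz] := eqVneq d 0.
  move: det_nz; rewrite d0 mulr0 sub0r oppr_eq0 mulf_eq0 negb_or => /andP[b_nz c_nz].
  have -> : v * b / c = (v * b ^+ 2 * c) / (b * c ^+ 2) by field; rewrite b_nz c_nz.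
  rewrite -(@ug_line_frame _ None (b ^+ 3) (a ^+ 2 * b + v * a * b ^+ 2));
    rewrite ?mulf_neq0 ?expf_neq0 //.
  congr line_through; rewrite /osc_frame /= ?scale_rv4 ?add_rv4 !mul_rv4 /GqMx /mx4 !mxE /=;
    by congr rv4; rewrite ?natr3_char2 ?(pcharf0 char2); ring.
have [t b_td] : exists t, b = t * d by exists (b / d); rewrite divfK.
rewrite {}b_td in det_nz *.
have sub_addE : a - t * c = a + t * c by rewrite (oppr_pchar2 char2).
have det_tE : a * d - t * d * c = d * (a + t * c) by rewrite (oppr_pchar2 char2); ring.
have e_nz : a + t * c != 0 by apply: contraNneq det_nz => e0; rewrite det_tE e0 mulr0.
(* Splitting [(a - t c)^2] as [(a - t c)(a + t c)] makes the coordinate identities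
   below hold in every characteristic, once [2 = 0] and [3 = 1] are substituted. *)
have -> : v * d ^+ 2 / (a * d - t * d * c) =
          v * d ^+ 2 * (a - t * c) / (d * ((a - t * c) * (a + t * c))).
  by rewrite det_tE sub_addE; field; rewrite d_nz e_nz.
have beta_nz : d * ((a - t * c) * (a + t * c)) != 0 by rewrite sub_addE !mulf_neq0.
rewrite mulfK // -(@ug_line_frame _ (Some t) (d ^+ 3) (c ^+ 2 * d + v * c * d ^+ 2));
  rewrite ?expf_neq0 //.
congr line_through; rewrite /osc_frame /= ?scale_rv4 ?add_rv4 !mul_rv4 /GqMx /mx4 !mxE /=;
  by congr rv4; rewrite ?natr3_char2 ?(pcharf0 char2); ring.
Qed.

Lemma stabMx_GqMx c d : stabMx c d = GqMx 1 0 c d.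
Proof.
apply/matrixP => -[[|[|[|[|i]]]] lt_i4] [[|[|[|[|j]]]] lt_j4]; rewrite !mxE //=;
  by rewrite ?natr3_char2 ?(pcharf0 char2); ring.
Qed.

Lemma GqMx_b0 a c d : a != 0 -> GqMx a 0 c d = a ^+ 3 *: stabMx (c / a) (d / a).
Proof.
move=> a_nz; apply/matrixP => -[[|[|[|[|i]]]] lt_i4] [[|[|[|[|j]]]] lt_j4];
  by rewrite !mxE //= ?natr3_char2 ?(pcharf0 char2); field.
Qed.

End CharTwo.

Section ProjectiveClasses.
Variable F : finFieldType.
Implicit Types (M N : 'M[F]_4) (a b c d k : F).

Lemma projclassP M N : reflect (exists2 k, k != 0 & N = k *: M) (N \in projclass M).
Proof.
apply: (iffP imsetP) => [[k] | [k k_nz ->]]; last by exists k; rewrite ?inE.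
by rewrite inE => k_nz ->; exists k.
Qed.

Lemma mem_projclass M : M \in projclass M.
Proof. by apply/projclassP; exists 1; rewrite ?oner_eq0 ?scale1r. Qed.

Lemma projclassZ k M : k != 0 -> projclass (k *: M) = projclass M.
Proof.
move=> k_nz; apply/setP => N; apply/projclassP/projclassP => -[k' k'_nz ->].
  by exists (k' * k); rewrite ?scalerA ?mulf_neq0.
by exists (k' / k); rewrite ?scalerA ?divfK ?mulf_neq0 ?invr_neq0.
Qed.

Lemma projclass_stabMx_inj c d c' d' :
  projclass (stabMx c d) = projclass (stabMx c' d') -> c = c' /\ d = d'.
Proof.
move=> eq_cl; have /projclassP[k _ eq_M] : stabMx c d \in projclass (stabMx c' d').
  by rewrite -eq_cl mem_projclass.
have entry i j : stabMx c d i j = (k *: stabMx c' d') i j by rewrite eq_M.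
move: (entry i0 i0) (entry i0 i1) (entry i1 i1); rewrite !mxE /= mulr1 => <-.
by rewrite !mul1r.
Qed.

Lemma Gq_mxP M :
  reflect (exists a b c d, a * d - b * c != 0 /\ M = GqMx a b c d) (M \in Gq_mx F).
Proof.
rewrite inE; apply: (iffP existsP) => [[a /existsP[b /existsP[c /existsP[d]]]] |
                                        [a [b [c [d [det_nz ->]]]]]].
  by case/andP => det_nz /eqP->; exists a, b, c, d.
exists a; apply/existsP; exists b; apply/existsP; exists c; apply/existsP; exists d.
by rewrite det_nz eqxx.
Qed.

Lemma GqMx_in a b c d : a * d - b * c != 0 -> GqMx a b c d \in Gq_mx F.
Proof. by move=> det_nz; apply/Gq_mxP; exists a, b, c, d. Qed.

End ProjectiveClasses.

Section Orbits.
Variable F : finFieldType.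
Hypothesis char2 : 2 \in [pchar F].
Implicit Types (v w : F) (U : 'M[F]_4).

Lemma line_orbit_ug_line0 v :
  line_orbit (ug_line (Some 0) v) =
  [set ug_line p.1 p.2 | p in setX [set: option F] [set w | (w == 0) == (v == 0)]].
Proof.
apply/setP => U; apply/imsetP/imsetP => [[M /Gq_mxP[a [b [c [d [det_nz ->]]]]] ->] | ].
  rewrite line_image_ug_line //; have [d0 | d_nz] := eqVneq d 0.
    move: det_nz; rewrite d0 mulr0 sub0r oppr_eq0 mulf_eq0 negb_or => /andP[b_nz c_nz].
    exists (None, v * b / c) => //.
    by rewrite !inE /= !mulf_eq0 invr_eq0 (negbTE b_nz) (negbTE c_nz) !orbF.
  exists (Some (b / d), v * d ^+ 2 / (a * d - b * c)) => //.
  by rewrite !inE /= !mulf_eq0 invr_eq0 (negbTE d_nz) (negbTE det_nz) !orbF.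
case=> -[o w]; rewrite !inE /= => /eqP w_v ->.
have [k k_nz vk_w] : exists2 k, k != 0 & v * k = w.
  have [v0 | v_nz] := eqVneq v 0.
    by exists 1; rewrite ?oner_eq0 // v0 mul0r; apply/esym/eqP; rewrite w_v v0.
  have w_nz : w != 0 by rewrite w_v.
  by exists (w / v); rewrite ?mulf_neq0 ?invr_neq0 // mulrC divfK.
case: o => [t|].
  exists (GqMx k^-1 t 0 1); first by rewrite GqMx_in // mulr1 mulr0 subr0 invr_neq0.
  rewrite line_image_ug_line ?mulr1 ?mulr0 ?subr0 ?invr_neq0 //.
  by rewrite oner_eq0 divr1 expr1n mulr1 invrK vk_w.
exists (GqMx 0 k 1 0); first by rewrite GqMx_in // mul0r sub0r mulr1 oppr_eq0.
by rewrite line_image_ug_line ?mul0r ?sub0r ?mulr1 ?oppr_eq0 // eqxx divr1 vk_w.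
Qed.

Lemma line_stab_ug_line0 v :
  line_stab (ug_line (Some 0) v) =
  [set projclass (stabMx p.1 p.2) | p in setX [set: F] [set d | (d != 0) && (v * d == v)]].
Proof.
apply/setP => g; apply/idP/imsetP => [| [[c d]]].
  rewrite inE => /andP[/imsetP[M /Gq_mxP[a [b [c [d [det_nz ->]]]]] ->] /forallP fixes].
  have := fixes (GqMx a b c d); rewrite mem_projclass /= => /eqP.
  rewrite line_image_ug_line //; case: eqVneq => [_ /ug_line_inj[] // | d_nz].
  case/ug_line_inj => -[b_d0] v_d.
  have b0 : b = 0 by move/eqP: b_d0; rewrite mulf_eq0 invr_eq0 (negbTE d_nz) orbF => /eqP.
  rewrite {}b0 mul0r subr0 in det_nz v_d *.
  have a_nz : a != 0 by apply: contraNneq det_nz => ->; rewrite mul0r.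
  exists (c / a, d / a); rewrite ?GqMx_b0 ?projclassZ ?expf_neq0 //.
  rewrite !inE /= mulf_neq0 ?invr_neq0 //=; apply/eqP.
  by rewrite -[in RHS]v_d; field; rewrite a_nz d_nz.
rewrite in_setX in_setT inE /= => /andP[d_nz /eqP vd_v] ->.
rewrite inE; apply/andP; split.
  by apply/imsetP; exists (stabMx c d); rewrite ?stabMx_GqMx ?GqMx_in ?mul0r ?subr0 ?mul1r.
apply/forallP => M; apply/implyP => /projclassP[k k_nz ->]; apply/eqP.
rewrite line_imageZ // (stabMx_GqMx char2) (line_image_ug_line char2) ?mul0r ?subr0 ?mul1r //.
by rewrite (negbTE d_nz) expr2 mulrA mulfK // vd_v.
Qed.

Lemma card_line_orbit_ug_line0 v :
  #|line_orbit (ug_line (Some 0) v)| =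
  if v == 0 then #|F|.+1 else (#|F|.+1 * #|F|.-1)%N.
Proof.
rewrite line_orbit_ug_line0 card_imset ?cardsX ?cardsT ?card_option; last first.
  by move=> [o w] [o' w'] /ug_line_inj[/= -> ->].
have [_ | _] := eqVneq v 0.
  rewrite (_ : [set w | _] = [set 0]) ?cards1 ?muln1 //.
  by apply/setP => w; rewrite !inE eqb_id.
rewrite (_ : [set w | _] = [set~ 0]) ?cardsC1 //.
by apply/setP => w; rewrite !inE eqbF_neg.
Qed.

Lemma card_line_stab_ug_line0 v :
  #|line_stab (ug_line (Some 0) v)| = if v == 0 then (#|F| * #|F|.-1)%N else #|F|.
Proof.
rewrite line_stab_ug_line0 card_imset ?cardsX ?cardsT; last first.
  by move=> [c d] [c' d'] /projclass_stabMx_inj[/= -> ->].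
have [-> | v_nz] := eqVneq v 0.
  rewrite (_ : [set d | _] = [set~ 0]) ?cardsC1 //.
  by apply/setP => d; rewrite !inE mul0r eqxx andbT.
rewrite (_ : [set d | _] = [set 1]) ?cards1 ?muln1 //.
apply/setP => d; rewrite !inE -{2}[v]mulr1 (inj_eq (mulfI v_nz)).
by apply/andb_idl => /eqP->; rewrite oner_eq0.
Qed.

Lemma UGamma_linesE :
  UGamma_lines F = line_orbit (ug_line (Some 0) 0) :|: line_orbit (ug_line (Some 0) 1).
Proof.
apply/setP => U; rewrite inE !line_orbit_ug_line0 // inE.
apply/is_UGammaP/orP => [[o [w ->]] | ]; last by case=> /imsetP[[o w] _ ->]; exists o, w.
have [-> | w_nz] := eqVneq w 0; [left | right]; apply/imsetP.
  by exists (o, 0); rewrite ?inE /=.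
by exists (o, w); rewrite // !inE /= oner_eq0 (negbTE w_nz).
Qed.

Lemma disjoint_line_orbits :
  [disjoint line_orbit (ug_line (Some (0 : F)) 0) & line_orbit (ug_line (Some 0) 1)].
Proof.
rewrite !line_orbit_ug_line0 // -setI_eq0; apply/eqP/setP => U; rewrite !inE.
apply/andP => -[/imsetP[[o w] w0 ->] /imsetP[[o' w'] w_nz /ug_line_inj[_ /= eq_w]]].
by move: w0 w_nz; rewrite !inE /= eq_w eqxx oner_eq0 => /eqP->.
Qed.

Lemma compl_regulusE : compl_regulus F = line_orbit (ug_line (Some 0) 0).
Proof.
rewrite line_orbit_ug_line0 //; apply/setP => U; rewrite inE; apply/andP/imsetP.
  case=> U_line /forallP meets.
  have [x [y [xy_nz ->]]] := tangent_transversal char2 U_line meets.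
  have [o ->] := regulus_line_ug char2 xy_nz.
  by exists (o, 0); rewrite // !inE /= eqxx.
case=> -[o w]; rewrite !inE /= eqxx => /eqP/eqP-> ->; split; first exact: is_line_ug_line.
apply/forallP => o'; case: o => [t|]; rewrite ?ug_line0_None ?(ug_line0_Some char2);
  by apply: regulus_line_meets_tangent; rewrite ?oner_eq0 ?orbT.
Qed.

End Orbits.

Theorem theorem6p3 (F : finFieldType) :
  ~~ odd #|F| -> (8 <= #|F|)%N ->
  let q := #|F| in
  let P0 := rv4 (0 : F) 0 0 1 in
  let l1 := line_through P0 (rv4 0 1 0 0) in
  let l2 := line_through P0 (rv4 0 1 1 0) in
  [/\ UGamma_lines F = line_orbit l1 :|: line_orbit l2,
      [disjoint line_orbit l1 & line_orbit l2],
      #|line_orbit l1| = q.+1,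
      #|line_orbit l2| = (q ^ 2 - 1)%N &
      line_orbit l1 = compl_regulus F] /\
  [/\ #|line_stab l1| = (q * (q - 1))%N,
      (forall g, g \in line_stab l1 ->
         exists c d : F, d != 0 /\ stabMx c d \in g),
      #|line_stab l2| = q &
      (forall g, g \in line_stab l2 -> exists c : F, stabMx c 1 \in g)].
Proof.
move=> /even_card_pchar2 char2 _ q P0 l1 l2.
have -> : l1 = ug_line (Some 0) 0 by rewrite ug_line_Some0.
have -> : l2 = ug_line (Some 0) 1 by rewrite ug_line_Some0.
rewrite /q !(card_line_orbit_ug_line0 char2) !(card_line_stab_ug_line0 char2) eqxx oner_eq0.
split; split=> //.
- exact: UGamma_linesE.
- exact: disjoint_line_orbits.
- by rewrite -!subn1 (subn_sqr _ 1) addn1 mulnC.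
- exact/esym/compl_regulusE.
- by rewrite subn1.
- move=> g; rewrite line_stab_ug_line0 // => /imsetP[[c d]].
  by rewrite in_setX !inE /= => /andP[d_nz _] ->; exists c, d; rewrite mem_projclass.
- move=> g; rewrite line_stab_ug_line0 // => /imsetP[[c d]].
  by rewrite in_setX !inE /= mul1r => /andP[_ /eqP->] ->; exists c; rewrite mem_projclass.
Qed.
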